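(* Let $k$ be a countable infinite field. The two-sorted ultrametric space $(k(t^{\mathbb Q}),d,D)$ underlying the valued field $k(t^{\mathbb Q})$ is, after identifying $D$ with $\mathbb Q_{\ge0}$ via an order isomorphism, isometric to the countable rational Urysohn ultrametric space $\mathbb U$.
   Context: The Hahn field $k[[t^{\mathbb Q}]]$ consists of formal series $a=\sum_{q\in\mathbb Q}a_qt^q$, $a_q\in k$, with well-ordered support $\mathrm{supp}(a)=\{q:a_q\ne0\}$, with the usual addition and multiplication; $k[t^{\mathbb Q}]$ is its subring of elements with finite support, and $k(t^{\mathbb Q})$ is the field of fractions of $k[t^{\mathbb Q}]$ (inside $k[[t^{\mathbb Q}]]$). The valuation is $v(a)=\min\mathrm{supp}(a)$ ($v(0)=\infty$). The distance set $D=\{e^{-q}:q\in\mathbb Q\}\cup\{0\}$ is ordered as a subset of $\mathbb R$ (order-isomorphic to $\mathbb Q_{\ge0}$), and $d(a,b)=e^{-v(a-b)}$ with $e^{-\infty}=0$. $\mathbb U$ is the unique countable ultrametric space with distances in $\mathbb Q_{\ge0}$ universal for finite rational ultrametric spaces in which every isometry between finite subsets extends to a global isometry. *)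

From HB Require Import structures.
From mathcomp Require Import all_boot all_order all_algebra.
From mathcomp Require Import reals.
From mathcomp Require Import sequences.
Set Implicit Arguments. Unset Strict Implicit. Unset Printing Implicit Defensive.
Import Order.TTheory GRing.Theory Num.Theory.
Local Open Scope ring_scope.

Section Hahn.
Variable k : fieldType.

(* A finite formal sum  sum_i c_i t^{q_i}  represented by the list of (q_i, c_i). *)
Definition ser := seq (rat * k).

Definition coef (s : ser) (q : rat) : k := \sum_(pc <- s | pc.1 == q) pc.2.

Definition ser_nz (s : ser) : Prop := exists q, coef s q != 0.

Definition ser_sub (s1 s2 : ser) : ser := s1 ++ [seq (pc.1, - pc.2) | pc <- s2].

Definition ser_mul (s1 s2 : ser) : ser :=
  [seq (pc1.1 + pc2.1, pc1.2 * pc2.2) | pc1 <- s1, pc2 <- s2].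

(* support (possibly with repetitions) *)
Definition ser_supp (s : ser) : seq rat :=
  [seq q <- [seq pc.1 | pc <- s] | coef s q != 0].

(* valuation v = min supp, None standing for +oo *)
Definition ser_val (s : ser) : option rat :=
  match ser_supp s with
  | [::] => None
  | q :: r => Some (foldr Num.min q r)
  end.

Record frac := Frac { num : ser; den : ser }.

(* elements of k(t^Q): fractions f/g with g <> 0 (two representatives denote
   the same element iff f g' = f' g, i.e. iff their distance is 0) *)
Definition kTQ := {x : frac | ser_nz (den x)}.

Definition frac_sub (x y : frac) : frac :=
  Frac (ser_sub (ser_mul (num x) (den y)) (ser_mul (num y) (den x)))
       (ser_mul (den x) (den y)).

Definition frac_val (x : frac) : option rat :=
  match ser_val (num x), ser_val (den x) with
  | Some a, Some b => Some (a - b)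
  | _, _ => None
  end.

Definition kdist (R : realType) (a b : kTQ) : R :=
  match frac_val (frac_sub (sval a) (sval b)) with
  | Some q => expR (- ratr q)
  | None => 0
  end.
End Hahn.

Definition inD (R : realType) (x : R) : Prop :=
  x = 0 \/ exists q : rat, x = expR (- ratr q).

Definition order_iso_D (R : realType) (phi : R -> rat) : Prop :=
  [/\ (forall x y, inD x -> inD y -> (phi x <= phi y) = (x <= y)),
      (forall x, inD x -> 0 <= phi x) &
      (forall q : rat, 0 <= q -> exists2 x, inD x & phi x = q)].

Definition rat_ultrametric (T : Type) (d : T -> T -> rat) : Prop :=
  [/\ (forall x y, 0 <= d x y),
      (forall x y, d x y = 0 <-> x = y),
      (forall x y, d x y = d y x) &
      (forall x y z, d x z <= Num.max (d x y) (d y z))].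

Definition rat_universal (U : Type) (dU : U -> U -> rat) : Prop :=
  forall (n : nat) (m : 'I_n -> 'I_n -> rat), rat_ultrametric m ->
    exists e : 'I_n -> U, forall i j, dU (e i) (e j) = m i j.

Definition rat_ultrahomogeneous (U : eqType) (dU : U -> U -> rat) : Prop :=
  forall (A : seq U) (h : U -> U) (inA := fun x : U => x \in A),
    (forall x y, inA x -> inA y -> dU (h x) (h y) = dU x y) ->
    exists g : U -> U,
      [/\ bijective g, (forall x y, dU (g x) (g y) = dU x y) &
          (forall x, inA x -> g x = h x)].

Definition is_rational_Urysohn_ultrametric (U : countType) (dU : U -> U -> rat) : Prop :=
  [/\ rat_ultrametric dU, rat_universal dU & rat_ultrahomogeneous dU].

(* Both spaces are countable ultrametric spaces with distance sets order-isomorphic to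
   Q_{>=0}: on k(t^Q) the distance e^{-v(a-b)} is replaced by [rat_to_pos (- v(a-b))],
   where [rat_to_pos] is an order isomorphism from Q onto Q_{>0}. A surjective isometry is
   then built by back-and-forth along enumerations, which only needs the one-point
   extension property for finite partial isometries on both sides. Elements of k(t^Q) are
   represented by fractions, and equal fractions are at distance 0, so the construction
   runs on a pseudo-ultrametric on the k(t^Q) side.
   In U the extension property comes from universality (embed the finite space with the
   new point added) and ultrahomogeneity (move the embedded copy back onto the given
   points). In k(t^Q), given a0, a finite set B and q, the element a0 + c t^q with c
   avoiding the finitely many values at which leading terms cancel satisfies
   v(a - b) = min (v(a0 - b), q) for every b in B; this is where k is required to be
   infinite. Taking for a0 the point of the configuration nearest to the target, the
   isosceles property of ultrametrics shows that these are exactly the required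
   distances. *)

From HB Require Import structures.
From mathcomp Require Import all_boot all_order all_algebra.
From mathcomp Require Import boolp reals exp sequences lra.
Import Order.TTheory GRing.Theory Num.Theory.
Local Open Scope ring_scope.
Set Implicit Arguments. Unset Strict Implicit.

Definition rat_to_pos (s : rat) : rat := if 0 <= s then s + 1 else (1 - s)^-1.

Lemma rat_to_pos_gt0 s : 0 < rat_to_pos s.
Proof.
rewrite /rat_to_pos; case: ifPn => [s_ge0|]; first by rewrite ltr_wpDl.
by rewrite -ltNge invr_gt0 subr_gt0 => /lt_trans->.
Qed.

Lemma rat_to_pos_homo : {homo rat_to_pos : x y / x < y}.
Proof.
move=> x y lt_xy; rewrite /rat_to_pos.
case: (leP 0 x) => [x_ge0|x_lt0]; first by rewrite (le_trans x_ge0 (ltW lt_xy)) ltrD2r.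
case: (leP 0 y) => [y_ge0|y_lt0].
  by rewrite (@lt_le_trans _ _ 1) ?lerDr // invf_lt1 ?subr_gt0 ?(lt_trans x_lt0) // ltrDl oppr_gt0.
by rewrite ltf_pV2 ?posrE ?subr_gt0 ?(lt_trans x_lt0) ?(lt_trans y_lt0) // ltrD2l ltrN2.
Qed.

Lemma rat_to_pos_le : {mono rat_to_pos : x y / x <= y}.
Proof. exact: le_mono rat_to_pos_homo. Qed.

Lemma rat_to_pos_surj r : 0 < r -> exists s, rat_to_pos s = r.
Proof.
move=> r_gt0; case: (leP 1 r) => [r_ge1|r_lt1].
  by exists (r - 1); rewrite /rat_to_pos subr_ge0 r_ge1 subrK.
exists (1 - r^-1); have r1_gt1 : 1 < r^-1 by rewrite invf_gt1.
by rewrite /rat_to_pos subr_ge0 leNgt r1_gt1 opprB addrCA subrr addr0 invrK.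
Qed.

Definition val_dist (v : option rat) : rat :=
  if v is Some q then rat_to_pos (- q) else 0.

Lemma val_dist_ge0 v : 0 <= val_dist v.
Proof. by case: v => // q; exact/ltW/rat_to_pos_gt0. Qed.

Lemma In_map_mem (T : Type) (U : eqType) (f : T -> U) x s :
  List.In x s -> f x \in map f s.
Proof. by elim: s => //= y s IH [->|/IH]; rewrite inE ?eqxx // => ->; rewrite orbT. Qed.

Lemma In_argmin (T : Type) (disp : Order.disp_t) (O : orderType disp) (f : T -> O)
    (L : seq T) : (0 < size L)%N ->
  exists2 p, List.In p L & forall p', List.In p' L -> (f p <= f p')%O.
Proof.
elim: L => [//|a [|b L] IH] _; first by exists a => [|p' [<-|[]]]; [left|].
case: (IH _) => // p p_in p_min.
case: (leP (f a) (f p)) => [le_ap|lt_pa].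
  by exists a => [|p' [<-//|/p_min]]; [left|exact: le_trans].
by exists p => [|p' [<-|/p_min//]]; [right|exact: ltW].
Qed.

Lemma mem_map_snd_In (A : Type) (B : eqType) (L : seq (A * B)) y :
  y \in map snd L -> exists x, List.In (x, y) L.
Proof.
elim: L => [//|[x' y'] L IH]; rewrite inE => /orP[/eqP->|/IH[x xy_in]].
  by exists x'; left.
by exists x; right.
Qed.

Lemma foldr_min_mem (disp : Order.disp_t) (O : orderType disp) (r : seq O) q0 :
  foldr Order.min q0 r \in q0 :: r.
Proof.
elim: r => [|y r IH] /=; first by rewrite mem_seq1.
case: leP => _; first by rewrite !inE eqxx orbT.
by move: IH; rewrite !inE => /orP[]->; rewrite ?orbT.
Qed.

Lemma foldr_min_le (disp : Order.disp_t) (O : orderType disp) (r : seq O) q0 x :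
  x \in q0 :: r -> (foldr Order.min q0 r <= x)%O.
Proof.
elim: r x => [|y r IH] x /=; first by rewrite mem_seq1 => /eqP->.
rewrite !inE ge_min => /or3P[/eqP->|/eqP->|x_r]; first by rewrite IH ?mem_head ?orbT.
  by rewrite lexx.
by rewrite IH ?inE ?x_r ?orbT.
Qed.

Section Ultrametric.
Variables (T : Type) (d : T -> T -> rat).
Hypotheses (d_sym : forall x y, d x y = d y x)
  (d_ultra : forall x y z, d x z <= Num.max (d x y) (d y z)).

Lemma ultra_max_eq u v w : d u v <= d u w -> d u w = Num.max (d v w) (d u v).
Proof.
move=> le_vw; apply/eqP; rewrite eq_le ge_max le_vw andbT.
have := d_ultra v u w; rewrite [d v u]d_sym (max_idPr le_vw) => -> /=.
by rewrite maxC d_ultra.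
Qed.

Lemma ultra_eq_of_dist0 (d_ge0 : forall x y, 0 <= d x y) x z w : d z w = 0 -> d x z = d x w.
Proof.
move=> dzw0; apply/eqP; rewrite eq_le.
have := d_ultra x w z; rewrite [d w z]d_sym dzw0 (max_idPl (d_ge0 _ _)) => ->.
by have := d_ultra x z w; rewrite dzw0 (max_idPl (d_ge0 _ _)).
Qed.

End Ultrametric.

Lemma countable_enumeration (X : Type) (C : countType) (f : X -> C) :
  injective f -> inhabited X -> exists e : nat -> X, forall x, exists n, e n = x.
Proof.
move=> f_inj [x0].
have pick_ex n : exists x, forall x', pickle (f x') = n -> x' = x.
  have [[x xn]|none] := pselect (exists x, pickle (f x) = n); last first.
    by exists x0 => x' x'n; case: none; exists x'.
  by exists x => x' x'n; apply/f_inj/(pcan_inj pickleK); rewrite x'n xn.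
have [e eP] := boolp.choice pick_ex.
by exists e => x; exists (pickle (f x)); rewrite -(eP _ x).
Qed.

Section BackAndForth.
Variables (T X Y : Type) (o : T) (dX : X -> X -> T) (dY : Y -> Y -> T).

Definition partial_isometry (L : seq (X * Y)) : Prop :=
  forall p p', List.In p L -> List.In p' L -> dY p.2 p'.2 = dX p.1 p'.1.

Hypotheses (dX_xx : forall x, dX x x = o) (dY_xx : forall y, dY y y = o)
  (dY_eq : forall y y', dY y y' = o -> y = y')
  (dX_sym : forall x x', dX x x' = dX x' x) (dY_sym : forall y y', dY y y' = dY y' y).
Variables (eX : nat -> X) (eY : nat -> Y).
Hypotheses (eX_surj : forall x, exists n, eX n = x) (eY_surj : forall y, exists n, eY n = y).

Lemma partial_isometry_cat1 L p : partial_isometry L ->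
  (forall p', List.In p' L -> dY p.2 p'.2 = dX p.1 p'.1) -> partial_isometry (L ++ [:: p]).
Proof.
move=> L_iso p_iso q q'; rewrite !List.in_app_iff /=.
move=> [q_in|[<-|[]]] [q'_in|[<-|[]]]; rewrite ?dX_xx ?dY_xx //; first exact: L_iso.
  by rewrite dY_sym dX_sym p_iso.
exact: p_iso.
Qed.

Section Construction.
Variables (fo : seq (X * Y) -> X -> Y) (bk : seq (X * Y) -> Y -> X).
Hypotheses
  (foP : forall L x, partial_isometry L ->
     forall p, List.In p L -> dY (fo L x) p.2 = dX x p.1)
  (bkP : forall L y, partial_isometry L ->
     forall p, List.In p L -> dX (bk L y) p.1 = dY y p.2).

Definition bf_step n L : X * Y :=
  if odd n then (bk L (eY n./2), eY n./2) else (eX n./2, fo L (eX n./2)).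

Fixpoint bf_stage n : seq (X * Y) :=
  if n is n'.+1 then bf_stage n' ++ [:: bf_step n' (bf_stage n')] else [::].

Lemma bf_stage_isometry n : partial_isometry (bf_stage n).
Proof.
elim: n => [|n IH] /=; first by move=> p p' [].
apply: partial_isometry_cat1 => // p' p'_in; rewrite /bf_step.
by case: ifP => _ /=; [rewrite bkP | rewrite foP].
Qed.

Lemma bf_stage_mono m n p : (m <= n)%N -> List.In p (bf_stage m) -> List.In p (bf_stage n).
Proof.
move=> /subnK<-; elim: (n - m)%N => [//|i IH] p_in.
by rewrite addSn /= List.in_app_iff; left; apply: IH.
Qed.

Lemma bf_step_in n : List.In (bf_step n (bf_stage n)) (bf_stage n.+1).
Proof. by rewrite /= List.in_app_iff; right; left. Qed.

Lemma bf_stages_isometry m n p p' :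
  List.In p (bf_stage m) -> List.In p' (bf_stage n) -> dY p.2 p'.2 = dX p.1 p'.1.
Proof.
by move=> /(bf_stage_mono (leq_maxl m n)) p_in /(bf_stage_mono (leq_maxr m n));
  exact: bf_stage_isometry.
Qed.

Lemma bf_limit : exists F : X -> Y,
  (forall a b, dY (F a) (F b) = dX a b) /\ (forall y, exists x, F x = y).
Proof.
have [idx idxP] := boolp.choice eX_surj.
have F_in x : List.In (x, fo (bf_stage (idx x).*2) x) (bf_stage (idx x).*2.+1).
  by have := bf_step_in (idx x).*2; rewrite /bf_step odd_double doubleK idxP.
exists (fun x => fo (bf_stage (idx x).*2) x); split=> [a b|y].
  exact: bf_stages_isometry (F_in a) (F_in b).
have [n <-] := eY_surj y; set x := bk (bf_stage n.*2.+1) (eY n).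
have y_in : List.In (x, eY n) (bf_stage n.*2.+2).
  by have := bf_step_in n.*2.+1; rewrite /bf_step /= odd_double /= uphalf_double.
by exists x; apply: dY_eq; rewrite (bf_stages_isometry (F_in x) y_in) dX_xx.
Qed.

End Construction.

Hypotheses
  (forth : forall L, partial_isometry L -> forall x, exists y,
     forall p, List.In p L -> dY y p.2 = dX x p.1)
  (back : forall L, partial_isometry L -> forall y, exists x,
     forall p, List.In p L -> dX x p.1 = dY y p.2).

Theorem back_and_forth : exists F : X -> Y,
  (forall a b, dY (F a) (F b) = dX a b) /\ (forall y, exists x, F x = y).
Proof.
have fo_ex L : exists f : X -> Y, forall x, partial_isometry L ->
    forall p, List.In p L -> dY (f x) p.2 = dX x p.1.
  have [iso|not_iso] := pselect (partial_isometry L); last by exists (fun=> eY 0) => x /not_iso.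
  by have [f fP] := boolp.choice (forth iso); exists f => x _; exact: fP.
have bk_ex L : exists f : Y -> X, forall y, partial_isometry L ->
    forall p, List.In p L -> dX (f y) p.1 = dY y p.2.
  have [iso|not_iso] := pselect (partial_isometry L); last by exists (fun=> eX 0) => y /not_iso.
  by have [f fP] := boolp.choice (back iso); exists f => y _; exact: fP.
have [fo foP] := boolp.choice fo_ex; have [bk bkP] := boolp.choice bk_ex.
by apply: (bf_limit (fo := fo) (bk := bk)) => L z; [exact: foP | exact: bkP].
Qed.

End BackAndForth.

Section Series.
Variable k : fieldType.
Implicit Types s t u : ser k.

Definition vanishes_below s (a : rat) := forall p, p < a -> coef s p = 0.

Lemma coef_cat s t q : coef (s ++ t) q = coef s q + coef t q.
Proof. by rewrite /coef big_cat. Qed.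

Lemma coef_sub s t q : coef (ser_sub s t) q = coef s q - coef t q.
Proof. by rewrite coef_cat /coef big_map sumrN. Qed.

Lemma coef_notin s q : q \notin map fst s -> coef s q = 0.
Proof.
move=> q_notin; rewrite /coef big_seq_cond big1 // => pc /andP[pc_s /eqP pcq].
by case/mapP: q_notin; exists pc; rewrite ?pcq.
Qed.

Lemma sum_ser_undup s (G : rat -> k) :
  \sum_(pc <- s) pc.2 * G pc.1 = \sum_(p <- undup (map fst s)) coef s p * G p.
Proof.
have -> : \sum_(p <- undup (map fst s)) coef s p * G p =
    \sum_(p <- undup (map fst s)) \sum_(pc <- s) (if pc.1 == p then pc.2 * G pc.1 else 0).
  apply: eq_bigr => p _; rewrite /coef big_distrl /= -big_mkcond /=.
  by apply: eq_bigr => pc /eqP ->.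
rewrite exchange_big /= [LHS]big_seq [RHS]big_seq; apply: eq_bigr => pc pc_s.
rewrite -big_mkcond /= -big_filter.
rewrite (eq_filter (a2 := pred1 pc.1)) => [|p]; last by rewrite /= eq_sym.
by rewrite filter_pred1_uniq ?undup_uniq ?mem_undup ?map_f // big_seq1.
Qed.

Lemma coef_mulE s t q : coef (ser_mul s t) q =
  \sum_(x <- s) \sum_(y <- t) (if x.1 + y.1 == q then x.2 * y.2 else 0).
Proof. by rewrite /coef big_mkcond big_allpairs_dep. Qed.

Lemma coef_mul s t q :
  coef (ser_mul s t) q = \sum_(p <- undup (map fst s)) coef s p * coef t (q - p).
Proof.
rewrite coef_mulE -(sum_ser_undup s (fun p => coef t (q - p))); apply: eq_bigr => x _.
rewrite /coef big_distrr /= [RHS]big_mkcond /=; apply: eq_bigr => y _.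
have -> : (y.1 == q - x.1) = (x.1 + y.1 == q) by rewrite eq_sym subr_eq addrC.
by case: ifP.
Qed.

Lemma coef_mul_catl s t u q :
  coef (ser_mul (s ++ t) u) q = coef (ser_mul s u) q + coef (ser_mul t u) q.
Proof. by rewrite !coef_mulE big_cat. Qed.

Lemma coef_mul_subl s t u q :
  coef (ser_mul (ser_sub s t) u) q = coef (ser_mul s u) q - coef (ser_mul t u) q.
Proof.
rewrite coef_mul_catl !coef_mulE big_map -sumrN; congr (_ + _).
by apply: eq_bigr => x _; rewrite -sumrN; apply: eq_bigr => y _; case: ifP; rewrite ?oppr0 ?mulNr.
Qed.

Definition coef3 s t u q : k := \sum_(x <- s) \sum_(y <- t) \sum_(z <- u)
  (if x.1 + y.1 + z.1 == q then x.2 * y.2 * z.2 else 0).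

Lemma coef_mul3 s t u q : coef (ser_mul (ser_mul s t) u) q = coef3 s t u q.
Proof. by rewrite coef_mulE /ser_mul big_allpairs_dep. Qed.

Lemma coef3C23 s t u q : coef3 s t u q = coef3 s u t q.
Proof.
rewrite /coef3; apply: eq_bigr => x _; rewrite exchange_big /=.
apply: eq_bigr => z _; apply: eq_bigr => y _.
by rewrite -!addrA [y.1 + _]addrC -!mulrA [y.2 * _]mulrC.
Qed.

Lemma coef_mul_monomial q c s t p :
  coef (ser_mul (ser_mul [:: (q, c)] s) t) p = c * coef (ser_mul s t) (p - q).
Proof.
rewrite coef_mul3 /coef3 big_seq1 coef_mulE big_distrr /=; apply: eq_bigr => y _.
rewrite big_distrr /=; apply: eq_bigr => z _.
have -> : (q + y.1 + z.1 == p) = (y.1 + z.1 == p - q) by apply/eqP/eqP => ?; lra.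
by case: ifP; rewrite ?mulr0 ?mulrA.
Qed.

(* The numerators of [a - c = (a - b) + (b - c)], for [x = n_x / d_x], over the
   common denominator [d_a d_b d_c]. *)
Lemma coef_cross_sub (na da nb db nc dc : ser k) p :
  coef (ser_mul (ser_sub (ser_mul na dc) (ser_mul nc da)) db) p =
  coef (ser_mul (ser_sub (ser_mul na db) (ser_mul nb da)) dc) p +
  coef (ser_mul (ser_sub (ser_mul nb dc) (ser_mul nc db)) da) p.
Proof.
rewrite !coef_mul_subl !coef_mul3 [coef3 na dc db p]coef3C23 [coef3 nb da dc p]coef3C23.
by rewrite [coef3 nc da db p]coef3C23 addrA subrK.
Qed.

Lemma mem_ser_supp s q : (q \in ser_supp s) = (coef s q != 0).
Proof.
rewrite mem_filter andb_idr //; apply: contraR => /coef_notin->.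
by rewrite eqxx.
Qed.

Lemma ser_val_Some s m : ser_val s = Some m -> coef s m != 0 /\ vanishes_below s m.
Proof.
rewrite /ser_val; case E: (ser_supp s) => [|q0 r] // [<-].
split; first by rewrite -mem_ser_supp E foldr_min_mem.
move=> p lt_p; apply/eqP; rewrite -[_ == 0]negbK -mem_ser_supp E.
by apply/negP => /foldr_min_le; rewrite leNgt lt_p.
Qed.

Lemma ser_val_None s : ser_val s = None <-> forall q, coef s q = 0.
Proof.
split=> [|s0].
  rewrite /ser_val; case E: (ser_supp s) => [|? ?] // _ q.
  by apply/eqP; rewrite -[_ == 0]negbK -mem_ser_supp E.
case E: (ser_val s) => [m|] //.
by have [] := ser_val_Some E; rewrite s0 eqxx.
Qed.

Lemma ser_valP s m : ser_val s = Some m <-> coef s m != 0 /\ vanishes_below s m.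
Proof.
split=> [|[sm0 below]]; first exact: ser_val_Some.
case E: (ser_val s) => [m'|]; last by move: sm0; rewrite (proj1 (ser_val_None s) E) eqxx.
have [sm'0 below'] := ser_val_Some E; congr Some.
by case: (ltgtP m' m) => // [/below|/below'] c0; [rewrite c0 eqxx in sm'0|rewrite c0 eqxx in sm0].
Qed.

Lemma ser_val_le s p : coef s p != 0 -> exists2 m, ser_val s = Some m & m <= p.
Proof.
move=> sp0; case E: (ser_val s) => [m|]; last by move: sp0; rewrite (proj1 (ser_val_None s) E) eqxx.
exists m => //; rewrite leNgt; apply: contra sp0 => /(proj2 (ser_val_Some E))->.
exact: eqxx.
Qed.

Lemma eq_ser_val s t :
  (forall q, (coef s q == 0) = (coef t q == 0)) -> ser_val s = ser_val t.
Proof.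
move=> st; case E: (ser_val t) => [m|].
  have [tm0 below] := ser_val_Some E; apply/ser_valP; split; first by rewrite st.
  by move=> p /below /eqP; rewrite -st => /eqP.
by apply/ser_val_None => q; apply/eqP; rewrite st (proj1 (ser_val_None t) E).
Qed.

Lemma coef_mul_below s t a b :
  vanishes_below s a -> vanishes_below t b -> vanishes_below (ser_mul s t) (a + b).
Proof.
move=> sa tb p lt_p; rewrite coef_mul big1 // => r _.
case: (ltP r a) => [/sa->|ge_r]; first by rewrite mul0r.
by rewrite tb ?mulr0 //; lra.
Qed.

Lemma coef_mul_lead s t a b : vanishes_below s a -> vanishes_below t b ->
  coef (ser_mul s t) (a + b) = coef s a * coef t b.
Proof.
move=> sa tb; rewrite coef_mul.
have off_a r : r != a -> coef s r * coef t (a + b - r) = 0.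
  case: (ltgtP r a) => // [/sa->|lt_ar] _; first by rewrite mul0r.
  by rewrite tb ?mulr0 //; lra.
case: (boolP (a \in undup (map fst s))) => a_in.
  rewrite (bigD1_seq a) ?undup_uniq //= big1_seq ?addr0 => [|r /andP[ra _]]; last exact: off_a.
  by rewrite [a + b]addrC addrK.
rewrite big1_seq => [|r /andP[_ r_in]]; last by apply: off_a; apply: contraNneq a_in => <-.
by rewrite coef_notin ?mul0r // -mem_undup.
Qed.

Lemma ser_val_mul s t es et : ser_val s = Some es -> ser_val t = Some et ->
  ser_val (ser_mul s t) = Some (es + et).
Proof.
move=> /ser_valP[s0 sb] /ser_valP[t0 tb]; apply/ser_valP.
by rewrite coef_mul_lead // mulf_neq0 //; split=> //; exact: coef_mul_below.
Qed.

Lemma ser_val_mulr s t et : ser_val t = Some et ->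
  ser_val (ser_mul s t) = omap (fun x => x + et) (ser_val s).
Proof.
move=> t_et; case E: (ser_val s) => [es|] /=; first exact: ser_val_mul.
apply/ser_val_None => q; rewrite coef_mul big1 // => p _.
by rewrite (proj1 (ser_val_None s) E) mul0r.
Qed.

End Series.

Section ValuedField.
Variable k : fieldType.
Implicit Types a b c : kTQ k.

Definition nu a := num (sval a).
Definition de a := den (sval a).

Definition num_sub a b := num (frac_sub (sval a) (sval b)).

Definition dval a : rat := odflt 0 (ser_val (de a)).

Lemma de_val a : ser_val (de a) = Some (dval a).
Proof.
rewrite /dval; case E: (ser_val (de a)) => //.
by have [q] := svalP a; rewrite (proj1 (ser_val_None _) E) eqxx.
Qed.

Definition delta a b : rat := val_dist (frac_val (frac_sub (sval a) (sval b))).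

Lemma deltaE a b : delta a b =
  if ser_val (num_sub a b) is Some x then rat_to_pos (dval a + dval b - x) else 0.
Proof.
rewrite /delta /frac_val -/(num_sub a b).
have -> : ser_val (den (frac_sub (sval a) (sval b))) = Some (dval a + dval b).
  exact: ser_val_mul (de_val a) (de_val b).
by case: ser_val => //= x; rewrite opprB.
Qed.

Lemma delta_ge0 a b : 0 <= delta a b.
Proof. exact: val_dist_ge0. Qed.

Lemma delta_xx a : delta a a = 0.
Proof.
rewrite deltaE; suff -> : ser_val (num_sub a a) = None by [].
by apply/ser_val_None => q; rewrite coef_sub subrr.
Qed.

Lemma delta_sym a b : delta a b = delta b a.
Proof.
rewrite !deltaE [dval b + _]addrC (@eq_ser_val _ (num_sub a b) (num_sub b a)) // => q.
by rewrite !coef_sub -oppr_eq0 opprB.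
Qed.

Lemma delta_ge_coef a b c p : coef (ser_mul (num_sub a b) (de c)) p != 0 ->
  rat_to_pos (dval a + dval b + dval c - p) <= delta a b.
Proof.
case/ser_val_le=> m; rewrite (ser_val_mulr _ (de_val c)) deltaE.
by case: ser_val => //= x [<-] le_m; rewrite rat_to_pos_le; lra.
Qed.

Lemma delta_ultra a b c : delta a c <= Num.max (delta a b) (delta b c).
Proof.
rewrite [delta a c]deltaE; case E: (ser_val (num_sub a c)) => [z|]; last first.
  by rewrite le_max delta_ge0.
have [nz0 nz_below] := ser_val_Some E; have [db0 db_below] := ser_val_Some (de_val b).
have : coef (ser_mul (num_sub a c) (de b)) (z + dval b) != 0.
  by rewrite coef_mul_lead // mulf_neq0.
rewrite (coef_cross_sub (nu a) (de a) (nu b)) -/(num_sub a b) -/(num_sub b c) le_max.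
case: (eqVneq (coef (ser_mul (num_sub a b) (de c)) (z + dval b)) 0) => [->|].
  rewrite add0r => /delta_ge_coef bc; apply/orP; right.
  by apply: le_trans bc; rewrite rat_to_pos_le; lra.
move=> /delta_ge_coef ab _; apply/orP; left.
by apply: le_trans ab; rewrite rat_to_pos_le; lra.
Qed.

Definition add_monomial a q (c : k) : kTQ k :=
  exist _ (Frac (nu a ++ ser_mul [:: (q, c)] (de a)) (de a)) (svalP a).

Lemma coef_num_sub_add_monomial a q (c : k) b p :
  coef (num_sub (add_monomial a q c) b) p =
  coef (num_sub a b) p + c * coef (ser_mul (de a) (de b)) (p - q).
Proof. by rewrite /num_sub /= !coef_sub coef_mul_catl coef_mul_monomial addrAC. Qed.

Lemma delta_add_monomial a b q (c : k) :
  coef (num_sub a b) (q + (dval a + dval b)) +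
    c * coef (ser_mul (de a) (de b)) (dval a + dval b) != 0 ->
  delta (add_monomial a q c) b = Num.max (delta a b) (rat_to_pos (- q)).
Proof.
set E := q + _ => lead_nz.
have [_ D_below] := ser_val_Some (ser_val_mul (de_val a) (de_val b)).
have coefN := coef_num_sub_add_monomial a q c b.
have below_E p : p < E -> c * coef (ser_mul (de a) (de b)) (p - q) = 0.
  by move=> lt_pE; rewrite D_below ?mulr0 // ltrBlDl.
have val_E : vanishes_below (num_sub a b) E ->
    ser_val (num_sub (add_monomial a q c) b) = Some E.
  move=> W_below; apply/ser_valP; split; first by rewrite coefN /E addrAC subrr add0r.
  by move=> p lt_pE; rewrite coefN W_below // below_E // addr0.
rewrite !deltaE (_ : dval (add_monomial a q c) = dval a) //.
case EW: (ser_val (num_sub a b)) => [x|]; last first.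
  rewrite val_E => [|p _]; last by rewrite (proj1 (ser_val_None _) EW).
  by rewrite (max_idPr (ltW (rat_to_pos_gt0 _))) /E; congr rat_to_pos; lra.
have [Wx0 W_below] := ser_val_Some EW.
case: (ltP x E) => [lt_xE|le_Ex].
  have -> : ser_val (num_sub (add_monomial a q c) b) = Some x.
    apply/ser_valP; rewrite coefN below_E // addr0; split=> // p lt_px.
    by rewrite coefN W_below // below_E ?addr0 //; exact: lt_trans lt_px lt_xE.
  by rewrite (max_idPl _) // rat_to_pos_le; rewrite /E in lt_xE; lra.
rewrite val_E => [|p lt_pE]; last by apply: W_below; exact: lt_le_trans lt_pE le_Ex.
have le_q : dval a + dval b - x <= - q by rewrite /E in le_Ex; lra.
by rewrite (max_idPr _) ?rat_to_pos_le // /E; congr rat_to_pos; lra.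
Qed.

Lemma kTQ_inj : injective (fun a : kTQ k => (nu a, de a)).
Proof.
move=> [[n1 d1] nz1] [[n2 d2] nz2]; rewrite /nu /de /= => -[e1 e2]; subst n2 d2.
by rewrite (Prop_irrelevance nz1 nz2).
Qed.

Lemma kTQ_inhabited : inhabited (kTQ k).
Proof.
have one_nz : ser_nz ([:: (0, 1)] : ser k).
  by exists 0; rewrite /coef big_cons big_nil eqxx addr0 oner_neq0.
exact: inhabits (exist _ (Frac [::] [:: (0, 1)]) one_nz).
Qed.

End ValuedField.

Section InfiniteField.
Variable k : fieldType.
Hypothesis k_infinite : forall s : seq k, exists x : k, x \notin s.

Lemma exists_avoid_affine (T : Type) (bs : seq T) (alpha beta : T -> k) :
  (forall b, List.In b bs -> beta b != 0) ->
  exists c, forall b, List.In b bs -> alpha b + c * beta b != 0.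
Proof.
move=> beta_nz; have [c c_notin] := k_infinite [seq - alpha b / beta b | b <- bs].
exists c => b b_in; apply: contra c_notin; rewrite addrC addr_eq0 => /eqP cb.
rewrite -(mulfK (beta_nz b b_in) c) cb.
exact: (In_map_mem (fun b => - alpha b / beta b) b_in).
Qed.

Lemma delta_extension a r (bs : seq (kTQ k)) : 0 <= r ->
  exists a', forall b, List.In b bs -> delta a' b = Num.max (delta a b) r.
Proof.
rewrite le_eqVlt => /orP[/eqP<-|r_gt0].
  by exists a => b _; rewrite (max_idPl (delta_ge0 _ _)).
have [s <-] := rat_to_pos_surj r_gt0.
pose alpha b := coef (num_sub a b) (- s + (dval a + dval b)).
pose beta b := coef (ser_mul (de a) (de b)) (dval a + dval b).
have [|c c_ok] := @exists_avoid_affine _ bs alpha beta.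
  by move=> b _; have [] := ser_val_Some (ser_val_mul (de_val a) (de_val b)).
by exists (add_monomial a (- s) c) => b /c_ok; rewrite -{2}[s]opprK; exact: delta_add_monomial.
Qed.

Variables (U : Type) (dU : U -> U -> rat).
Hypotheses (dU_ge0 : forall u v, 0 <= dU u v) (dU_sym : forall u v, dU u v = dU v u)
  (dU_ultra : forall u v w, dU u w <= Num.max (dU u v) (dU v w)).

Lemma kTQ_back L : partial_isometry (@delta k) dU L -> forall u, exists a,
  forall p, List.In p L -> delta a p.1 = dU u p.2.
Proof.
move=> L_iso u; case: L L_iso => [|p1 L'] L_iso; first by case: (kTQ_inhabited k) => a; exists a.
have [p0 p0_in p0_min] := @In_argmin _ _ _ (fun p => dU u p.2) (p1 :: L') isT.
have [a a_ext] := delta_extension p0.1 (map fst (p1 :: L')) (dU_ge0 u p0.2).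
exists a => p p_in; rewrite a_ext; last exact: (List.in_map fst _ _ p_in).
have <- := L_iso _ _ p0_in p_in.
by rewrite -ultra_max_eq // p0_min.
Qed.

End InfiniteField.

Section OnePointExtension.
Variables (U : countType) (dU : U -> U -> rat) (r : U -> rat).

(* [None] is the new point, at distance [r y] from [y]. *)
Definition ext_dist (a b : option U) : rat :=
  match a, b with
  | Some y, Some z => dU y z
  | Some y, None | None, Some y => r y
  | None, None => 0
  end.

Hypothesis hU : is_rational_Urysohn_ultrametric dU.
Variable ys : seq U.
Hypotheses (ys_uniq : uniq ys) (r_gt0 : {in ys, forall y, 0 < r y})
  (r_ultra : {in ys &, forall y z, r y <= Num.max (dU y z) (r z)})
  (dU_ultra_r : {in ys &, forall y z, dU y z <= Num.max (r y) (r z)}).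

Let pts := rcons (map Some ys) None.
Let pt (i : 'I_(size ys).+1) := nth None pts i.

Lemma pt_inj : injective pt.
Proof.
have pts_uniq : uniq pts.
  rewrite rcons_uniq (map_inj_uniq (@Some_inj _)) ys_uniq andbT.
  by apply/mapP => -[].
move=> i j; rewrite /pt => /eqP; rewrite nth_uniq ?size_rcons ?size_map // => /eqP.
exact: val_inj.
Qed.

Lemma pt_cases i : pt i = None \/ exists2 y, y \in ys & pt i = Some y.
Proof.
have : pt i \in None :: map Some ys by rewrite -mem_rcons mem_nth // size_rcons size_map.
by case/predU1P => [->|/mapP[y y_in ->]]; [left|right; exists y].
Qed.

Lemma pt_max : pt ord_max = None.
Proof. by rewrite /pt nth_rcons size_map ltnn eqxx. Qed.

Lemma pt_index y : y \in ys -> exists2 i : 'I_(size ys).+1, (i < size ys)%N & pt i = Some y.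
Proof.
move=> y_in; have lt_y : (index y ys < size ys)%N by rewrite index_mem.
have idx_y : (inord (index y ys) : 'I_(size ys).+1) = index y ys :> nat.
  by rewrite inordK // ltnS ltnW.
exists (inord (index y ys)); rewrite ?idx_y //.
by rewrite /pt idx_y nth_rcons size_map lt_y (nth_map y) // nth_index.
Qed.

Lemma ext_dist_ultrametric : rat_ultrametric (fun i j => ext_dist (pt i) (pt j)).
Proof.
have [[dU_ge0 dU_eq0 dU_sym dU_ultra] _ _] := hU.
split=> [i j|i j|i j|i j l].
- by case: (pt_cases i) (pt_cases j) => [->|[y y_in ->]] [->|[z z_in ->]] //=;
    apply: ltW; apply: r_gt0.
- split=> [|->]; last by case: (pt j) => //= y; apply/dU_eq0.
  move=> d0; apply: pt_inj; move: d0.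
  case: (pt_cases i) (pt_cases j) => [->|[y y_in ->]] [->|[z z_in ->]] //=.
  + by move=> rz0; have := r_gt0 z_in; rewrite rz0 ltxx.
  + by move=> ry0; have := r_gt0 y_in; rewrite ry0 ltxx.
  + by move/dU_eq0 ->.
- by case: (pt i) (pt j) => [y|] [z|] /=.
- case: (pt_cases i) (pt_cases j) (pt_cases l) =>
    [->|[y y_in ->]] [->|[z z_in ->]] [->|[w w_in ->]] /=;
    rewrite ?le_max ?lexx ?orbT //.
  + by rewrite ltW ?r_gt0.
  + by rewrite orbC -le_max dU_sym r_ultra.
  + by rewrite -le_max dU_ultra_r.
  + by rewrite -le_max r_ultra.
  + by rewrite -le_max dU_ultra.
Qed.

Lemma Urysohn_one_point : exists u, {in ys, forall y, dU u y = r y}.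
Proof.
have [[dU_ge0 dU_eq0 dU_sym dU_ultra] univ homog] := hU.
have [e e_iso] := univ _ _ ext_dist_ultrametric.
have e_inj : injective e.
  move=> i j eij; have [_ m_eq0 _ _] := ext_dist_ultrametric.
  by apply/m_eq0; rewrite -e_iso eij; apply/dU_eq0.
pose h v := if [pick i | e i == v] is Some i then odflt v (pt i) else v.
have h_e i : h (e i) = odflt (e i) (pt i).
  by rewrite /h; case: pickP => [j /eqP/e_inj->|/(_ i)]; rewrite ?eqxx.
pose A := [seq e i | i : 'I_(size ys).+1 <- enum 'I_(size ys).+1 & (i < size ys)%N].
have A_pt v : v \in A -> exists2 i, v = e i & pt i = Some (h v).
  case/mapP=> i; rewrite mem_filter => /andP[lt_i _] ->; exists i => //.
  rewrite h_e /pt nth_rcons size_map lt_i (nth_map (e i)) //.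
have [g [_ g_iso g_h]] : exists g : U -> U, [/\ bijective g,
    forall v w, dU (g v) (g w) = dU v w & forall v, v \in A -> g v = h v].
  apply: homog => v w /A_pt[i -> pti] /A_pt[j -> ptj].
  by rewrite e_iso pti ptj.
exists (g (e ord_max)) => y /pt_index[i lt_i pti].
have ei_A : e i \in A by apply: map_f; rewrite mem_filter lt_i mem_enum.
have hy : h (e i) = y by rewrite h_e pti.
by rewrite -{1}hy -(g_h _ ei_A) g_iso e_iso pt_max pti.
Qed.

End OnePointExtension.

Section Urysohn.
Variables (U : countType) (dU : U -> U -> rat).
Hypothesis hU : is_rational_Urysohn_ultrametric dU.

Lemma Urysohn_inhabited : inhabited U.
Proof.
have [_ univ _] := hU.
have point : rat_ultrametric (fun _ _ : 'I_1 => 0 : rat).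
  by split=> // i j; rewrite (ord1 i) (ord1 j).
by have [e _] := univ 1%N _ point; exact: inhabits (e ord0).
Qed.

Variables (X : Type) (dX : X -> X -> rat).
Hypotheses (dX_ge0 : forall x y, 0 <= dX x y) (dX_sym : forall x y, dX x y = dX y x)
  (dX_ultra : forall x y z, dX x z <= Num.max (dX x y) (dX y z)).

Lemma Urysohn_forth L : partial_isometry dX dU L -> forall x, exists u,
  forall p, List.In p L -> dU u p.2 = dX x p.1.
Proof.
move=> L_iso x; have [[_ dU_eq0 _ _] _ _] := hU.
have [[p [p_in xp0]]|far] := pselect (exists p, List.In p L /\ dX x p.1 = 0).
  exists p.2 => p' p'_in; rewrite (L_iso _ _ p_in p'_in) [RHS]dX_sym [LHS]dX_sym.
  by apply: ultra_eq_of_dist0; rewrite // dX_sym.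
have rep_ex y : exists x', y \in map snd L -> List.In (x', y) L.
  by have [/mem_map_snd_In[x' ?]|] := boolP (y \in map snd L); [exists x'|exists x].
have [rep rep_in] := boolp.choice rep_ex.
have iso_rep y z : y \in map snd L -> z \in map snd L -> dU y z = dX (rep y) (rep z).
  by move=> /rep_in y_in /rep_in z_in; exact: L_iso y_in z_in.
have [|y z|y z|u u_r] := @Urysohn_one_point U dU (fun y => dX x (rep y)) hU
    (undup (map snd L)) (undup_uniq _).
- move=> y; rewrite mem_undup => /rep_in y_in; rewrite lt_def dX_ge0 andbT.
  by apply/eqP => d0; apply: far; exists (rep y, y).
- rewrite !mem_undup => y_in z_in; rewrite iso_rep // maxC [dX (rep y) _]dX_sym.
  exact: dX_ultra.
- rewrite !mem_undup => y_in z_in; rewrite iso_rep // [dX x (rep y)]dX_sym.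
  exact: dX_ultra.
exists u => p p_in; have p2_in := In_map_mem snd p_in.
rewrite u_r ?mem_undup //; apply: ultra_eq_of_dist0 => //.
by rewrite -(L_iso _ _ (rep_in _ p2_in) p_in) /=; apply/dU_eq0.
Qed.

End Urysohn.

Section DistanceSet.
Variable R : realType.

Definition dist_to_val (x : R) : option rat :=
  if pselect (exists q : rat, x = expR (- ratr q)) is left ex then Some (sval (cid ex))
  else None.

Lemma dist_to_val_exp q : dist_to_val (expR (- ratr q)) = Some q.
Proof.
rewrite /dist_to_val; case: pselect => [ex|[]]; last by exists q.
by case: (cid ex) => q' /= /expR_inj/oppr_inj/fmorph_inj->.
Qed.

Lemma dist_to_val0 : dist_to_val 0 = None.
Proof.
rewrite /dist_to_val; case: pselect => // -[q q0].
by have := expR_gt0 (- ratr q : R); rewrite -q0 ltxx.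
Qed.

Definition phiD (x : R) : rat := val_dist (dist_to_val x).

Lemma phiD_order_iso : order_iso_D phiD.
Proof.
rewrite /phiD; split=> [x y [->|[q ->]] [->|[q' ->]]|x [->|[q ->]]|q].
- by rewrite dist_to_val0 !lexx.
- by rewrite dist_to_val0 dist_to_val_exp (ltW (rat_to_pos_gt0 _)) (ltW (expR_gt0 _)).
- by rewrite dist_to_val0 dist_to_val_exp !leNgt rat_to_pos_gt0 expR_gt0.
- by rewrite !dist_to_val_exp rat_to_pos_le ler_expR !lerN2 ler_rat.
- by rewrite dist_to_val0.
- exact: val_dist_ge0.
rewrite le_eqVlt => /orP[/eqP<-|/rat_to_pos_surj[s <-]].
  by exists 0; [left|rewrite dist_to_val0].
by exists (expR (- ratr (- s))); [right; exists (- s)|rewrite dist_to_val_exp /= opprK].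
Qed.

Lemma phiD_kdist (k : fieldType) (a b : kTQ k) : phiD (kdist R a b) = delta a b.
Proof.
by rewrite /phiD /kdist /delta; case: frac_val => [q|]; rewrite ?dist_to_val_exp ?dist_to_val0.
Qed.

End DistanceSet.

Theorem corollary3p33 (k : countFieldType)
  (k_infinite : forall s : seq k, exists x : k, x \notin s)
  (R : realType) (U : countType) (dU : U -> U -> rat)
  (hU : is_rational_Urysohn_ultrametric dU) :
  exists (phi : R -> rat) (F : kTQ k -> U),
    [/\ order_iso_D phi,
        (forall a b : kTQ k, dU (F a) (F b) = phi (kdist R a b)) &
        (forall u : U, exists a : kTQ k, F a = u)].
Proof.
have [[dU_ge0 dU_eq0 dU_sym dU_ultra] _ _] := hU.
have [eX eX_surj] := countable_enumeration (@kTQ_inj k) (kTQ_inhabited k).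
have [eY eY_surj] := countable_enumeration (@inj_id U) (Urysohn_inhabited hU).
have dU_xx u : dU u u = 0 by apply/dU_eq0.
have dU_eq u v : dU u v = 0 -> u = v by move/dU_eq0.
have [F [F_iso F_surj]] := back_and_forth (@delta_xx k) dU_xx dU_eq (@delta_sym k) dU_sym
  eX_surj eY_surj
  (Urysohn_forth hU (@delta_ge0 k) (@delta_sym k) (@delta_ultra k))
  (kTQ_back k_infinite dU_ge0 dU_sym dU_ultra).
by exists (@phiD R), F; split=> [|a b|//]; [exact: phiD_order_iso|rewrite F_iso phiD_kdist].
Qed.
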